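(* Let $X$ be a Tychonoff space and $\mathcal{H}$ a subspace with $\mathcal{F}_2(X)\subset\mathcal{H}\subset\mathcal{K}(X)$. If $\mathcal{H}$ is an $F'$-space, then $X$ is a $P$-space.
   Context: $\mathcal{K}(X)$ is the set of nonempty compact subsets of $X$ with the Vietoris topology (generated by $U^+=\{A: A\subset U\}$ and $U^-=\{A: A\cap U\neq\emptyset\}$ for $U$ open in $X$), and $\mathcal{F}_2(X)$ its subspace of nonempty subsets with at most $2$ points. A $P$-space is a space in which every point lies in the interior of every $G_\delta$ set containing it. A cozero set is the complement of a zero set $f^{-1}(0)$ of a continuous real-valued function; an $F'$-space is a Tychonoff space in which any two disjoint cozero sets have disjoint closures. *)

From HB Require Import structures.
From mathcomp Require Import all_boot all_order all_algebra.
From mathcomp Require Import all_classical all_reals.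
From mathcomp Require Import topology normedtype borel_hierarchy.
From mathcomp Require Import subspace_topology subtype_topology.

Set Implicit Arguments.
Unset Strict Implicit.
Unset Printing Implicit Defensive.
Import Order.TTheory GRing.Theory Num.Theory.
Import numFieldNormedType.Exports.
Local Open Scope classical_set_scope.
Local Open Scope ring_scope.

Definition tychonoff_space (R : realType) (T : topologicalType) : Prop :=
  accessible_space T /\
  forall (x : T) (B : set T), closed B -> ~ B x ->
    exists f : T -> R, [/\ continuous f, f x = 0 & forall b, B b -> f b = 1].

Definition cozero (R : realType) (T : Type) (f : T -> R) : set T :=
  [set x | f x != 0].

Definition F'_space (R : realType) (T : topologicalType) : Prop :=
  tychonoff_space R T /\
  forall f g : T -> R, continuous f -> continuous g ->
    cozero f `&` cozero g = set0 ->
    closure (cozero f) `&` closure (cozero g) = set0.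

Definition P_space (T : topologicalType) : Prop :=
  forall (G : set T) (x : T), Gdelta G -> G x -> (G°) x.

(** The Vietoris topology on the type of all subsets of X, generated by the
    subbase  U^+ = [set A | A `<=` U]  and  U^- = [set A | A `&` U !=set0]
    for U open in X.  K(X) and F_2(X) then carry the subspace topology. *)
Definition vietoris (X : topologicalType) : Type := set X.

HB.instance Definition _ (X : topologicalType) :=
  Choice.on (vietoris X).

Definition vietoris_subbase (X : topologicalType) (i : bool * set X)
  : set (vietoris X) :=
  if i.1 then [set A : set X | A `<=` i.2]
  else [set A : set X | A `&` i.2 !=set0].

HB.instance Definition _ (X : topologicalType) :=
  isSubBaseTopological.Build (vietoris X)
    [set i : bool * set X | open i.2] (@vietoris_subbase X).

Definition Kspace (X : topologicalType) : set (vietoris X) :=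
  [set A : set X | compact A /\ A !=set0].

Definition F2space (X : topologicalType) : set (vietoris X) :=
  [set A : set X | exists x y : X, A = [set x; y]].

Arguments Kspace X : clear implicits.
Arguments F2space X : clear implicits.
Arguments P_space T : clear implicits.

From HB Require Import structures.
From mathcomp Require Import all_boot all_order all_algebra.
From mathcomp Require Import all_classical all_reals.
From mathcomp Require Import topology normedtype borel_hierarchy.
From mathcomp Require Import subspace_topology subtype_topology.
From mathcomp Require Import finmap lra.

Set Implicit Arguments.
Unset Strict Implicit.
Unset Printing Implicit Defensive.
Import Order.TTheory GRing.Theory Num.Theory.
Import numFieldNormedType.Exports.
Local Open Scope classical_set_scope.
Local Open Scope ring_scope.

(** If a point x lies in a G_delta set G but not in its interior, complete
    regularity gives a continuous f : X -> [0, 1] with f x = 0 which is positive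
    at points arbitrarily close to x: a weighted supremum of Urysohn functions of
    the open sets whose intersection is G.  On the hyperspace the maps
    A |-> sup f(A) and A |-> inf f(A) are Vietoris continuous, hence so is
    e(A) = 2 inf f(A) - sup f(A).  Now e {y} = f y > 0 while e {x, y} < 0, and
    as y approaches x both {y} and {x, y} approach {x}.  So {x} lies in the
    closures of the disjoint cozero sets {e > 0} and {e < 0} of the F'-space. *)

Lemma continuous_uniform_approx (R : realType) (T : topologicalType) (f : T -> R) :
  (forall e, 0 < e ->
     exists2 g : T -> R, continuous g & forall t, `|f t - g t| < e) ->
  continuous f.
Proof.
move=> approx t; apply/(@cvgrPdist_lt _ _ _ _ (nbhs_filter t)) => e e0.
have e3 : 0 < e / 3 by rewrite divr_gt0.
have [g gc fg] := approx _ e3.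
have := (@cvgrPdist_lt _ _ _ _ (nbhs_filter t) g (g t)).1 (gc t) _ e3.
apply: filterS => s; move: (fg t) (fg s); rewrite !ltr_distlC.
by move=> /andP[? ?] /andP[? ?] /andP[? ?]; apply/andP; split; lra.
Qed.

Lemma continuous_bigmax (R : realType) (T : topologicalType) (I : Type)
  (r : seq I) (F : I -> T -> R) :
  (forall i, continuous (F i)) ->
  continuous (fun t => \big[Num.max/0]_(i <- r) F i t).
Proof.
move=> Fc; elim: r => [|i r IH].
  by under eq_fun do rewrite big_nil; exact: cst_continuous.
under eq_fun do rewrite big_cons.
by move=> t; exact: (continuous_max (Fc i t) (IH t)).
Qed.

Lemma continuous_sup_seq (R : realType) (T : topologicalType) (h : nat -> T -> R) :
  (forall n, continuous (h n)) -> (forall n t, 0 <= h n t <= n.+1%:R^-1) ->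
  continuous (fun t => sup (range (h ^~ t))).
Proof.
move=> hc h0.
(* The partial maxima [g N] are within [N.+1%:R^-1] of the supremum. *)
pose g N t := \big[Num.max/0]_(n < N) h n t.
have hle n t : h n t <= n.+1%:R^-1 by have /andP[] := h0 n t.
have le_sup n t : h n t <= sup (range (h ^~ t)).
  apply: ub_le_sup; last by exists n.
  by exists 1 => _ [m _ <-]; apply: le_trans (hle m t) _; rewrite invf_le1 ?ler1n.
have gc N : continuous (g N) by apply: continuous_bigmax.
apply: continuous_uniform_approx => e /(ltr_add_invr) [N]; rewrite add0r => Ne.
exists (g N) => // t; rewrite ger0_norm ?subr_ge0.
  apply: le_lt_trans Ne; rewrite lerBlDl.
  apply: ge_sup; first by exists (h 0%N t), 0%N.
  move=> _ [n _ <-]; have g0 : 0 <= g N t by exact: bigmax_ge_id.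
  have [nN|Nn] := ltnP n N.
    apply: le_trans (le_bigmax 0 (fun i : 'I_N => h i t) (Ordinal nN)) _.
    by rewrite lerDl invr_ge0.
  apply: le_trans (hle n t) _; rewrite -(add0r n.+1%:R^-1); apply: lerD g0 _.
  by rewrite lef_pV2 ?posrE // ler_nat.
apply: bigmax_le => [|n _]; last exact: le_sup.
by apply: le_trans (le_sup 0%N t); have /andP[] := h0 0%N t.
Qed.

Lemma tychonoff_bump (R : realType) (X : topologicalType) (U : set X) (x : X) :
  tychonoff_space R X -> open U -> U x ->
  exists h : X -> R, [/\ continuous h, forall y, 0 <= h y <= 1, h x = 0 &
    forall y, ~ U y -> h y = 1].
Proof.
move=> [_ tyX] oU Ux.
have [g [gc gx g1]] := tyX x (~` U) (open_closedC oU) (fun nUx => nUx Ux).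
exists (fun y => Num.min `|g y| 1); split.
- by move=> y; exact: (continuous_min (cvg_norm (gc y)) (cvg_cst (1 : R^o))).
- by move=> y; rewrite le_min normr_ge0 ler01 /= ge_min lexx orbT.
- by rewrite gx normr0 min_l ?ler01.
- by move=> y /g1 ->; rewrite normr1 minxx.
Qed.

Lemma Gdelta_not_interior_bump (R : realType) (X : topologicalType)
  (G : set X) (x : X) :
  tychonoff_space R X -> Gdelta G -> G x -> ~ (G°) x ->
  exists f : X -> R, [/\ continuous f, forall y, 0 <= f y <= 1, f x = 0 &
    forall N, nbhs x N -> exists2 y, N y & 0 < f y].
Proof.
move=> tyX [U oU GE] Gx nGx.
have Ux n : U n x by move: Gx; rewrite GE; apply.
have /choice[h hP] := fun n => tychonoff_bump tyX (oU n) (Ux n).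
pose w (n : nat) : R := n.+1%:R^-1.
have w_gt0 n : 0 < w n by rewrite invr_gt0.
have w_le1 n : w n <= 1 by rewrite invf_le1 ?ler1n.
have wh_ge0 n y : 0 <= w n * h n y.
  have [_ /(_ y) /andP[h0 _] _ _] := hP n; exact: mulr_ge0 (ltW (w_gt0 n)) h0.
have wh_le n y : w n * h n y <= w n.
  have [_ /(_ y) /andP[_ h1] _ _] := hP n; exact: ler_piMr (ltW (w_gt0 n)) h1.
pose f y := sup (range (fun n => w n * h n y)).
have f_ge n y : w n * h n y <= f y.
  apply: ub_le_sup; last by exists n.
  by exists 1 => _ [m _ <-]; exact: le_trans (wh_le m y) (w_le1 m).
have f_ge0 y : 0 <= f y := le_trans (wh_ge0 0%N y) (f_ge 0%N y).
have f_le y c : (forall n, w n * h n y <= c) -> f y <= c.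
  move=> hc; apply: ge_sup => [|_ [n _ <-]]; last exact: hc.
  by exists (w 0%N * h 0%N y), 0%N.
exists f; split.
- apply: continuous_sup_seq => [n y|n y]; last by rewrite wh_ge0 wh_le.
  by have [hc _ _ _] := hP n; apply: cvgM; [exact: cvg_cst | exact: hc].
- by move=> y; rewrite f_ge0 f_le // => n; exact: le_trans (wh_le n y) (w_le1 n).
- by apply/le_anti; rewrite f_ge0 f_le // => n; have [_ _ -> _] := hP n; rewrite mulr0.
move=> N Nx; have /existsNP[y /not_implyP[Ny nGy]] : ~ (N `<=` G).
  by move=> NG; apply: nGx; exact: filterS NG Nx.
move: nGy; rewrite GE => /existsNP[n /not_implyP[_ nUy]].
exists y => //; apply: lt_le_trans (f_ge n y).
by have [_ _ _ /(_ y nUy) ->] := hP n; rewrite mulr1.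
Qed.

Section vietoris_topology.
Variable X : topologicalType.

Lemma open_vietoris_subbase (i : bool * set X) :
  open i.2 -> open (vietoris_subbase i).
Proof.
move=> oi; exists [set vietoris_subbase i].
  move=> _ ->; exists [fset i]%fset.
    by move=> j; rewrite inE => /eqP ->; rewrite in_setE.
  apply/seteqP; split=> A; first by move=> /(_ i); apply; rewrite /= inE.
  by move=> Ai j; rewrite /= inE => /eqP ->.
by apply/seteqP; split=> A; [case=> _ -> | exists (vietoris_subbase i)].
Qed.

Lemma vietoris_subbase_nbhs (i : bool * set X) (A : vietoris X) :
  open i.2 -> vietoris_subbase i A -> nbhs A (vietoris_subbase i).
Proof. by move=> /open_vietoris_subbase oi Ai; apply: open_nbhs_nbhs. Qed.

Lemma vietoris_nbhs_pair (O : set (vietoris X)) (x : X) :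
  open O -> O [set x] ->
  exists2 N : set X, nbhs x N & forall y z, N y -> N z -> O [set y; z].
Proof.
move=> [D' sD' <-] [k D'k kx].
have [F sF kE] := sD' k D'k.
exists (\bigcap_(i in [set` F]) i.2).
  apply: filter_bigI => i iF.
  have := kx; rewrite -kE => /(_ i iF); rewrite /vietoris_subbase.
  have /set_mem oi := sF i iF.
  case: i iF oi => [[] U] /= _ oU.
    by move=> /(_ x erefl) Ux; exact: open_nbhs_nbhs.
  by move=> [_ [-> Ux]]; exact: open_nbhs_nbhs.
move=> y z Ny Nz; exists k => //; change (k [set y; z]); rewrite -kE => i iF.
have := Ny i iF; have := Nz i iF; rewrite /vietoris_subbase.
case: i iF => [[] U] /= _ Uz Uy; first by move=> w [->|->].
by exists y; split => //; left.
Qed.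

End vietoris_topology.

Section vietoris_sup.
Variables (R : realType) (X : topologicalType) (f : X -> R) (M : R).
Hypotheses (fc : continuous f) (fM : forall y, f y <= M).

Let has_ubound_image (A : set X) : has_ubound (f @` A).
Proof. by exists M => _ [y _ <-]. Qed.

Lemma near_vietoris_sup_lt (A : vietoris X) (r : R) : sup (f @` A) < r ->
  \forall B \near A, B !=set0 -> sup (f @` B) < r.
Proof.
move=> /midf_lt[]; set m := (_ + r) / 2 => sm mr.
have : nbhs A (vietoris_subbase (true, f @^-1` [set t | t < m])).
  apply: vietoris_subbase_nbhs; first exact/(continuousP f).1/open_lt.
  by move=> y Ay /=; apply: le_lt_trans sm; apply: ub_le_sup => //; exists y.
apply: filterS => B /= Bm B0; apply: le_lt_trans mr.
by apply: ge_sup => [|_ [y By <-]]; [exact: image_nonempty | exact/ltW/Bm].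
Qed.

Lemma near_vietoris_sup_gt (A : vietoris X) (r : R) : A !=set0 ->
  r < sup (f @` A) -> \forall B \near A, r < sup (f @` B).
Proof.
move=> A0 /sup_gt[|_ [a Aa <-] ra]; first exact: image_nonempty.
have : nbhs A (vietoris_subbase (false, f @^-1` [set t | r < t])).
  by apply: vietoris_subbase_nbhs; [exact/(continuousP f).1/open_gt | exists a].
apply: filterS => B [b [Bb rb]]; apply: lt_le_trans rb _.
by apply: ub_le_sup => //; exists b.
Qed.

Lemma continuous_sup_image (H : set (vietoris X)) :
  (forall A, H A -> A !=set0) ->
  continuous (fun A : set_type H => sup (f @` set_val A)).
Proof.
move=> H0 A; apply/(@cvgrPdist_lt _ _ _ _ (nbhs_filter A)) => e e0.
have A0 := H0 _ (set_mem (valP A)).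
have near_val P :
    (\forall B \near set_val A, P B) -> \forall B \near A, P (set_val B).
  exact: initial_continuous.
set s := sup (f @` set_val A).
have lt_e : s - e < s by lra.
have gt_e : s < s + e by lra.
have near_gt := near_val _ (near_vietoris_sup_gt A0 lt_e).
have near_lt := near_val _ (near_vietoris_sup_lt gt_e).
apply: (@filterS _ _ (nbhs_filter A) _ _ _ (filterI near_gt near_lt)).
move=> B [gtB /(_ (H0 _ (set_mem (valP B)))) ltB].
by rewrite ltr_distlC gtB ltB.
Qed.

End vietoris_sup.

Lemma continuous_inf_image (R : realType) (X : topologicalType)
  (f : X -> R) (m : R) (H : set (vietoris X)) :
  continuous f -> (forall y, m <= f y) -> (forall A, H A -> A !=set0) ->
  continuous (fun A : set_type H => inf (f @` set_val A)).
Proof.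
move=> fc fm H0; under eq_fun do rewrite /inf image_comp.
have nfc : continuous (-%R \o f) by move=> y; apply: cvgN; exact: fc.
have nfm y : (-%R \o f) y <= - m by rewrite /= lerN2.
move=> A; apply: cvgN; first exact: nbhs_filter.
exact: (@continuous_sup_image _ _ _ _ nfc nfm _ H0 A).
Qed.

Lemma cozero_max0 (R : realType) (T : Type) (g : T -> R) :
  cozero (fun t => Num.max (g t) 0) = [set t | 0 < g t].
Proof.
apply/seteqP; split=> t; rewrite /cozero /=.
  by apply: contraNT; rewrite -leNgt => g0; rewrite max_r.
by move=> g0; rewrite max_l ?ltW ?gt_eqF.
Qed.

Lemma F'_space_closure_sign_disjoint (R : realType) (T : topologicalType)
  (e : T -> R) :
  F'_space R T -> continuous e ->
  closure [set t | 0 < e t] `&` closure [set t | e t < 0] = set0.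
Proof.
move=> [_ F'T] ec.
have pos_part (g : T -> R) :
    continuous g -> continuous (fun t => Num.max (g t) 0).
  by move=> gc t; exact: (continuous_max (gc t) (cvg_cst (0 : R^o))).
have -> : [set t | e t < 0] = [set t | 0 < - e t].
  by apply/seteqP; split=> t /=; rewrite oppr_gt0.
rewrite -!cozero_max0; apply: F'T; [exact: pos_part | |].
  by apply: pos_part => t; apply: cvgN; exact: ec.
by rewrite !cozero_max0; apply/seteqP; split=> // t /= [e0]; rewrite oppr_gt0; lra.
Qed.

Section vietoris_pairs.
Variables (X : topologicalType) (H : set (vietoris X)).
Hypothesis F2H : F2space X `<=` H.

Definition doubleton (y z : X) : set_type H :=
  exist _ [set y; z] (mem_set (F2H (ex_intro _ y (ex_intro _ z erefl)))).

Lemma set_val_doubleton (y z : X) : set_val (doubleton y z) = [set y; z].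
Proof. by []. Qed.

Lemma closure_doubleton (S : set (set_type H)) (x : X) :
  (forall N, nbhs x N -> exists y z, [/\ N y, N z & S (doubleton y z)]) ->
  closure S (doubleton x x).
Proof.
move=> hS B; rewrite nbhsE => -[C [[O oO OC] Cx] CB].
have Ox : O [set x] by rewrite -(setUid [set x]); move: Cx; rewrite -OC.
have [N Nx NO] := vietoris_nbhs_pair oO Ox.
have [y [z [Ny Nz Syz]]] := hS N Nx.
by exists (doubleton y z); split => //; apply: CB; rewrite -OC; exact: NO.
Qed.

End vietoris_pairs.

Unset Implicit Arguments.

Theorem proposition3p6 (R : realType) (X : topologicalType)
  (H : set (vietoris X)) :
  tychonoff_space R X ->
  F2space X `<=` H -> H `<=` Kspace X ->
  F'_space R (set_type H) ->
  P_space X.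
Proof.
move=> tyX F2H HK F'H G x GG Gx; apply: contrapT => nGx.
have [f [fc f01 fx fN]] := Gdelta_not_interior_bump tyX GG Gx nGx.
have f_ge0 y : 0 <= f y by have /andP[] := f01 y.
have f_le1 y : f y <= 1 by have /andP[] := f01 y.
have H0 A : H A -> A !=set0 by move=> /HK[].
pose e (A : set_type H) := 2 * inf (f @` set_val A) - sup (f @` set_val A).
have ec : continuous e.
  have sc := continuous_sup_image fc f_le1 H0.
  have ic := continuous_inf_image fc f_ge0 H0.
  move=> A; apply: continuousB (sc A); apply: continuousM (ic A).
  exact: cst_continuous.
have e_single y : e (doubleton F2H y y) = f y.
  by rewrite /e set_val_doubleton setUid image_set1 inf1 sup1; lra.
have e_pair y : 0 < f y -> e (doubleton F2H x y) < 0.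
  move=> fy; rewrite /e set_val_doubleton.
  have : inf (f @` [set x; y]) <= f x.
    by apply: ge_inf; [exists 0 => _ [z _ <-] | exists x; [left|]].
  have : f y <= sup (f @` [set x; y]).
    by apply: ub_le_sup; [exists 1 => _ [z _ <-] | exists y; [right|]].
  lra.
suff : (closure [set A | 0 < e A] `&` closure [set A | e A < 0])
         (doubleton F2H x x).
  by rewrite F'_space_closure_sign_disjoint.
split; apply: closure_doubleton => N Nx; have [y Ny fy] := fN N Nx.
  by exists y, y; rewrite /= e_single.
by exists x, y; split => //; [exact: nbhs_singleton | exact: e_pair].
Qed.
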